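(* Let $G$ be a finite-rank splitter which is $p$-reduced for every prime $p$, and let $0\neq U$ be a pure subgroup of $G$. Then $\mathrm{nuc}\,U=\mathrm{nuc}\,G$.
   Context: For a torsion-free abelian group $G\neq0$, $\mathrm{nuc}\,G$ is the largest subring $R$ of $\mathbb{Q}$ such that $G$ is an $R$-module. A torsion-free $R$-module $G$ over its nucleus $R$ is a finite-rank splitter if $\mathrm{Ext}(G',G)=0$ for all finite-rank $R$-submodules $G'$ of $G$. $G$ is $p$-reduced if $\bigcap_{k\in\omega}p^kG=0$. A subgroup $U\subseteq G$ is pure if $G/U$ is torsion-free. *)

From HB Require Import structures.
From mathcomp Require Import all_boot all_order all_algebra.
Set Implicit Arguments. Unset Strict Implicit. Unset Printing Implicit Defensive.
Import GRing.Theory Num.Theory.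
Local Open Scope ring_scope.

Definition subring_Q (S : rat -> Prop) : Prop :=
  [/\ S 1, forall r s, S r -> S s -> S (r - s) & forall r s, S r -> S s -> S (r * s)].

Definition subgroup (G : zmodType) (P : G -> Prop) : Prop :=
  [/\ P 0, forall x y, P x -> P y -> P (x + y) & forall x, P x -> P (- x)].

Definition torsion_free (G : zmodType) : Prop :=
  forall (n : nat) (x : G), (0 < n)%N -> x *+ n = 0 -> x = 0.

Definition module_over (G : zmodType) (P : G -> Prop) (S : rat -> Prop)
  (act : rat -> G -> G) : Prop :=
  [/\ forall r x, S r -> P x -> P (act r x),
      forall x, P x -> act 1 x = x,
      forall r s x, S r -> S s -> P x -> act (r * s) x = act r (act s x),
      forall r s x, S r -> S s -> P x -> act (r + s) x = act r x + act s x
    & forall r x y, S r -> P x -> P y -> act r (x + y) = act r x + act r y].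

(* nuc P : the largest subring of Q over which P is a module, realised as the
   union of all subrings S of Q such that P admits an S-module structure *)
Definition nuc (G : zmodType) (P : G -> Prop) (q : rat) : Prop :=
  exists (S : rat -> Prop) (act : rat -> G -> G),
    [/\ subring_Q S, S q & module_over P S act].

Definition fullset (G : zmodType) : G -> Prop := fun _ => True.

(* P is an R-submodule of G, R = nuc G: closed under every action of a
   subring of Q on G (these actions realise the nuc G-module structure) *)
Definition nuc_submodule (G : zmodType) (P : G -> Prop) : Prop :=
  subgroup P /\
  forall (S : rat -> Prop) (act : rat -> G -> G),
    subring_Q S -> module_over (@fullset G) S act ->
    forall r x, S r -> P x -> P (act r x).

(* finite (torsion-free) rank: P is contained in the divisible hull of the
   subgroup generated by finitely many elements of P *)
Definition finite_rank (G : zmodType) (P : G -> Prop) : Prop :=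
  exists s : seq G, (forall i, (i < size s)%N -> P (nth 0 s i)) /\
    forall x, P x -> exists (n : nat) (c : nat -> int),
      (0 < n)%N /\ x *+ n = \sum_(i < size s) (nth 0 s i) *~ c i.

(* Ext(P, G) = 0 : every extension 0 -> G -i-> X -pi-> P -> 0 of abelian
   groups splits (pi : X -> G with image exactly P, kernel = image of i). *)
Definition Ext_zero (G : zmodType) (P : G -> Prop) : Prop :=
  forall (X : zmodType) (i : {additive G -> X}) (pi : {additive X -> G}),
    injective i ->
    (forall y, P y <-> exists x, pi x = y) ->
    (forall x, pi x = 0 <-> exists g, i g = x) ->
    exists sigma : G -> X,
      (forall a b, P a -> P b -> sigma (a + b) = sigma a + sigma b) /\
      (forall a, P a -> pi (sigma a) = a).

Definition finite_rank_splitter (G : zmodType) : Prop :=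
  forall P : G -> Prop, nuc_submodule P -> finite_rank P -> Ext_zero P.

Definition p_reduced (G : zmodType) (p : nat) : Prop :=
  forall x : G, (forall k : nat, exists y : G, x = y *+ (p ^ k)) -> x = 0.

(* pure subgroup: G/U torsion-free *)
Definition pure (G : zmodType) (U : G -> Prop) : Prop :=
  subgroup U /\ forall (n : nat) (x : G), (0 < n)%N -> U (x *+ n) -> U x.

From mathcomp Require Import all_boot all_order all_algebra.
From mathcomp Require Import ring.
Set Implicit Arguments. Unset Strict Implicit.
Import GRing.Theory Num.Theory.
Local Open Scope ring_scope.

(* If a subring S of Q makes a subgroup P an S-module and S contains a rational
   q with denominator d, then by Bezout 1/d is in S, so every element of P is
   divisible by every power of d.  A nonzero element of a group which is
   p-reduced for every prime p admits no such divisibility when d > 1, so the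
   nucleus of every nonzero subgroup of G is Z; in particular nuc U = Z = nuc G. *)

Section SubringQ.
Variable S : rat -> Prop.
Hypothesis subS : subring_Q S.

Lemma subring_Q0 : S 0.
Proof. by case: subS => S1 SB _; rewrite -(subrr 1); apply: SB. Qed.

Lemma subring_QN r : S r -> S (- r).
Proof. by case: subS => _ SB _ Sr; rewrite -sub0r; apply: SB => //; apply: subring_Q0. Qed.

Lemma subring_QD r s : S r -> S s -> S (r + s).
Proof. by case: subS => _ SB _ Sr Ss; rewrite -[s]opprK; apply: SB => //; apply: subring_QN. Qed.

Lemma subring_Qn (n : nat) : S n%:R.
Proof.
elim: n => [|n IHn]; first exact: subring_Q0.
by rewrite -natr1; apply: subring_QD => //; case: subS.
Qed.

Lemma subring_Qz (m : int) : S m%:~R.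
Proof.
by case: m => n; [exact: subring_Qn | rewrite NegzE mulrNz; apply/subring_QN/subring_Qn].
Qed.

Lemma subring_Q_invdenq q : S q -> S (denq q)%:~R^-1.
Proof.
move=> Sq; have [u [v uv]] := Bezoutz (numq q) (denq q).
rewrite /gcdz (eqP (coprime_num_den q)) in uv.
have -> : (denq q)%:~R^-1 = u%:~R * q + v%:~R :> rat.
  rewrite -[in RHS](divq_num_den q).
  set d : rat := (denq q)%:~R; set n : rat := (numq q)%:~R.
  have d_neq0 : d != 0 by rewrite intr_eq0 denq_neq0.
  have uvQ : u%:~R * n + v%:~R * d = 1 by rewrite -!intrM -intrD uv.
  by rewrite -[LHS]mul1r -[X in X / d = _]uvQ; field.
apply: subring_QD; last exact: subring_Qz.
by case: subS => _ _ SM; apply: SM => //; apply: subring_Qz.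
Qed.

End SubringQ.

Section ModuleOver.
Variables (G : zmodType) (P : G -> Prop) (S : rat -> Prop) (act : rat -> G -> G).
Hypotheses (subS : subring_Q S) (modP : module_over P S act).

Lemma act0 y : P y -> act 0 y = 0.
Proof.
case: modP => _ _ _ actD _ Py.
have := actD 0 0 y (subring_Q0 subS) (subring_Q0 subS) Py.
by rewrite addr0 => /(congr1 (fun z => z - act 0 y)); rewrite addrK subrr.
Qed.

Lemma act_natr (n : nat) y : P y -> act n%:R y = y *+ n.
Proof.
move=> Py; elim: n => [|n IHn]; first by rewrite act0.
case: modP => _ act1 _ actD _.
rewrite -natr1 actD //; last by case: subS.
  by rewrite IHn act1 // mulrSr.
exact: subring_Qn.
Qed.

Lemma module_over_divisible (n : nat) x : (0 < n)%N -> S n%:R^-1 -> P x ->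
  forall k, exists2 z, P z & x = z *+ n ^ k.
Proof.
move=> n_gt0 Sn Px; elim=> [|k [z Pz ->]]; first by exists x.
case: modP => actP act1 actM _ _.
exists (act n%:R^-1 z); first exact: actP.
rewrite expnS mulrnA; congr (_ *+ _).
rewrite -act_natr; last exact: actP.
rewrite -actM //; last exact: subring_Qn.
by rewrite mulfV ?act1 // pnatr_eq0 -lt0n.
Qed.

End ModuleOver.

Lemma p_reduced_divisible_eq0 (G : zmodType) (p n : nat) (x : G) :
  p_reduced G p -> (p %| n)%N -> (0 < n)%N ->
  (forall k, exists z, x = z *+ n ^ k) -> x = 0.
Proof.
move=> redp /dvdnP[m ->] mp_gt0 divx; apply: redp => k.
have [z ->] := divx k; exists (z *+ m ^ k).
by rewrite -mulrnA -expnMn.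
Qed.

Lemma nuc_denq (G : zmodType) (P : G -> Prop) x q :
  (forall p : nat, prime p -> p_reduced G p) -> P x -> x != 0 -> nuc P q ->
  denq q = 1.
Proof.
move=> red Px x_neq0 [S [act [subS Sq modP]]].
set d := `|denq q|%N.
have d_gt0 : (0 < d)%N by rewrite absz_gt0 denq_neq0.
have dE : denq q = d by rewrite gtz0_abs ?denq_gt0.
have Sd : S d%:R^-1 by move: (subring_Q_invdenq subS Sq); rewrite dE.
have divx := module_over_divisible subS modP d_gt0 Sd Px.
rewrite dE; apply/eqP; apply: contraNT x_neq0 => d_neq1.
have d_gt1 : (1 < d)%N by rewrite ltn_neqAle eq_sym d_gt0 andbT.
apply/eqP; apply: (p_reduced_divisible_eq0 (red _ (pdiv_prime d_gt1)) (pdiv_dvd d) d_gt0).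
by move=> k; have [z _ ->] := divx k; exists z.
Qed.

Lemma subgroup_mulz (G : zmodType) (P : G -> Prop) x (m : int) :
  subgroup P -> P x -> P (x *~ m).
Proof.
case=> P0 PD PN Px.
have Pxn n : P (x *+ n) by elim: n => [|n IHn] //; rewrite mulrSr; apply: PD.
by case: m => n; [exact: Pxn | rewrite NegzE mulrNz; exact/PN/Pxn].
Qed.

Lemma nuc_int (G : zmodType) (P : G -> Prop) q :
  subgroup P -> denq q = 1 -> nuc P q.
Proof.
move=> subP q_int.
have floorK (r : rat) : r \is a Num.int -> r = (Num.floor r)%:~R.
  by rewrite intrEfloor => /eqP.
exists (fun r : rat => r \is a Num.int), (fun r x => x *~ Num.floor r).
split; first by split; [exact: rpred1 | exact: rpredB | exact: rpredM].
  by rewrite Qint_def q_int.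
split=> [r x _ Px | x _ | r s x Zr Zs _ | r s x Zr Zs _ | r x y _ _ _].
- exact: subgroup_mulz.
- by rewrite -[1]/(1%:~R : rat) intrKfloor.
- by rewrite (floorK r) // (floorK s) // -intrM !intrKfloor mulrC mulrzA.
- by rewrite (floorK r) // (floorK s) // -intrD !intrKfloor mulrzDr.
- exact: mulrzDl.
Qed.

Theorem corollary4p4 (G : zmodType) (U : G -> Prop) :
  torsion_free G ->
  (exists x : G, x != 0) ->
  finite_rank_splitter G ->
  (forall p : nat, prime p -> p_reduced G p) ->
  pure U ->
  (exists x : G, U x /\ x != 0) ->
  forall q : rat, nuc U q <-> nuc (@fullset G) q.
Proof.
move=> _ _ _ red [subU _] [x [Ux x_neq0]] q.
have subG : subgroup (@fullset G) by [].
split=> nuc_q; apply: nuc_int => //.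
- exact: nuc_denq red Ux x_neq0 nuc_q.
- exact: (nuc_denq (P := @fullset G) red I x_neq0 nuc_q).
Qed.
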